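(* Let $m,p\in\mathbb{N}$ with $m\ge p$, let $w=(w_1,\dots,w_m)^t\in\mathbb{R}^m$, and let $Z=(z_1,\dots,z_m)^t$ be an $m\times p$ real matrix such that any set of $p$ distinct row vectors of $Z$ is linearly independent. Then there exist $R>0$ and $\delta>0$ (possibly depending on $w$ and $Z$) such that $$\prod_{i=1}^m\frac{1}{1+|w_i-z_i^t\beta|}\le\frac{1}{(1+\delta|\beta|)^{m-p+1}}$$ for all $\beta\in\mathbb{R}^p$ with $|\beta|\ge R$.
   Context: $|\beta|$ is the Euclidean norm. *)

From HB Require Import structures.
From mathcomp Require Import all_boot all_order all_algebra.
From mathcomp Require Import reals.
Set Implicit Arguments. Unset Strict Implicit. Unset Printing Implicit Defensive.
Import Order.TTheory GRing.Theory Num.Theory.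
Local Open Scope ring_scope.

Definition eucl_norm (R : realType) (p : nat) (v : 'cV[R]_p) : R :=
  Num.sqrt (\sum_(j < p) v j 0 ^+ 2).

Definition rows_in_general_position (R : realType) (m p : nat)
  (Z : 'M[R]_(m, p)) : Prop :=
  forall f : 'I_p -> 'I_m, injective f -> row_free (rowsub f Z).

From HB Require Import structures.
From mathcomp Require Import all_boot all_order all_algebra.
From mathcomp Require Import reals.
From mathcomp Require Import ring lra zify.
Set Implicit Arguments. Unset Strict Implicit. Unset Printing Implicit Defensive.
Import Order.TTheory GRing.Theory Num.Theory.
Local Open Scope ring_scope.

(* Let N1 be the l1 norm of beta, which dominates its Euclidean norm.  Any p
   rows of Z form an invertible matrix A, so N1 <= C_A max_k |(A beta)_k| where
   C_A is the sum of the absolute entries of A^-1.  With K larger than every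
   C_A, fewer than p rows can have |z_i^t beta| < N1 / K.  The remaining
   m - p + 1 rows or more satisfy |w_i - z_i^t beta| >= N1 / K - |w|_1, which is
   at least |beta| / (2 K) once |beta| >= 2 K |w|_1; their factors are then
   at most (1 + |beta| / (2 K))^-1 and all the other factors are at most 1. *)

Definition norm1 (R : numDomainType) (n : nat) (v : 'cV[R]_n) : R :=
  \sum_i `|v i 0|.

Definition mx_abs_sum (R : numDomainType) (m n : nat) (A : 'M[R]_(m, n)) : R :=
  \sum_i \sum_j `|A i j|.

Lemma ler_sumr_term (R : numDomainType) (I : finType) (F : I -> R) (x : I) :
  (forall y, 0 <= F y) -> F x <= \sum_y F y.
Proof. by move=> F0; rewrite (bigD1 x) //= lerDl; apply: sumr_ge0. Qed.

Lemma mx_abs_sum_ge0 (R : numDomainType) (m n : nat) (A : 'M[R]_(m, n)) :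
  0 <= mx_abs_sum A.
Proof. by apply: sumr_ge0 => i _; apply: sumr_ge0. Qed.

Lemma sumr_sqr_le_sqr_sum_norm (R : realDomainType) (I : Type) (s : seq I)
    (F : I -> R) :
  \sum_(i <- s) F i ^+ 2 <= (\sum_(i <- s) `|F i|) ^+ 2.
Proof.
elim: s => [|a s IH]; first by rewrite !big_nil expr2 mulr0.
rewrite !big_cons -(real_normK (num_real (F a))).
have := normr_ge0 (F a); have : 0 <= \sum_(i <- s) `|F i| by apply: sumr_ge0.
nra.
Qed.

Lemma eucl_norm_le_norm1 (R : realType) (p : nat) (v : 'cV[R]_p) :
  eucl_norm v <= norm1 v.
Proof.
have n1_ge0 : 0 <= norm1 v by apply: sumr_ge0.
rewrite /eucl_norm -[norm1 v](ger0_norm n1_ge0) -sqrtr_sqr.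
by rewrite ler_sqrt ?sqr_ge0 ?sumr_sqr_le_sqr_sum_norm.
Qed.

Lemma norm1_le_invmx (R : numFieldType) (p : nat) (A : 'M[R]_p) (b : 'cV[R]_p)
    (M : R) :
  A \in unitmx -> (forall k, `|(A *m b) k 0| <= M) ->
  norm1 b <= mx_abs_sum (invmx A) * M.
Proof.
move=> A_unit AbM; rewrite /norm1 -{1}(mulKmx A_unit b) mulr_suml.
apply: ler_sum => j _; rewrite mxE mulr_suml.
apply: le_trans (ler_norm_sum _ _ _) _; apply: ler_sum => k _.
by rewrite normrM ler_wpM2l.
Qed.

Lemma card_ge_inj_ord (T : finType) (B : {set T}) (n : nat) :
  (n <= #|B|)%N -> exists2 f : 'I_n -> T, injective f & forall k, f k \in B.
Proof.
move=> leB; exists (fun k => enum_val (widen_ord leB k)).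
  by move=> k1 k2 /enum_val_inj/(congr1 val) k12; apply: val_inj.
by move=> k; apply: enum_valP.
Qed.

Lemma prod_inv1D_le (R : realFieldType) (I : finType) (F : I -> R) (S : {set I})
    (a : R) (n : nat) :
  0 <= a -> (forall i, 0 <= F i) -> (n <= #|S|)%N -> {in S, forall i, a <= F i} ->
  \prod_i (1 + F i)^-1 <= ((1 + a) ^+ n)^-1.
Proof.
move=> a0 F0 leS aF; set c := (1 + a)^-1.
have c0 : 0 <= c by rewrite invr_ge0; lra.
have c1 : c <= 1 by rewrite invf_le1; lra.
apply: le_trans (_ : \prod_i (if i \in S then c else 1) <= _).
  apply: ler_prod => i _; have Fi0 := F0 i.
  rewrite invr_ge0 addr_ge0 //=; case: ifPn => [/aF aFi | _].
  - by rewrite lef_pV2 ?posrE ?lerD2l //; lra.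
  - by rewrite invf_le1 ?lerDl //; lra.
by rewrite -big_mkcond /= prodr_const -exprVn ler_wiXn2l.
Qed.

Section GeneralPosition.

Variables (R : realType) (m p : nat) (Z : 'M[R]_(m, p)).
Hypothesis Z_gp : rows_in_general_position Z.

(* The terms of non-injective maps are junk (invmx of a singular matrix) but
   nonnegative, so summing over all maps keeps this an upper bound for the
   injective ones. *)
Definition gp_constant : R :=
  1 + \sum_(f : {ffun 'I_p -> 'I_m}) mx_abs_sum (invmx (rowsub f Z)).

Lemma gp_constant_ge1 : 1 <= gp_constant.
Proof. by rewrite lerDl sumr_ge0 // => f _; apply: mx_abs_sum_ge0. Qed.

Let K := gp_constant.

Lemma card_small_rows_lt (beta : 'cV[R]_p) : 0 < norm1 beta ->
  (#|[set i | (`|(Z *m beta) i 0| < norm1 beta / K)%R]| < p)%N.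
Proof.
move=> n1_gt0; rewrite ltnNge; apply/negP=> /card_ge_inj_ord[f f_inj f_small].
have K1 : 1 <= K := gp_constant_ge1.
have A_unit : rowsub f Z \in unitmx by rewrite -row_free_unit (Z_gp f_inj).
have Ab_small k : `|(rowsub f Z *m beta) k 0| <= norm1 beta / K.
  by have := f_small k; rewrite inE mul_rowsub_mx !mxE; apply: ltW.
have CA_le : mx_abs_sum (invmx (rowsub f Z)) <= K - 1.
  rewrite /K /gp_constant addrAC subrr add0r.
  have -> : rowsub f Z = rowsub (finfun f) Z.
    by apply/matrixP => i j; rewrite !mxE ffunE.
  by apply: ler_sumr_term => g; apply: mx_abs_sum_ge0.
have n1E : norm1 beta = K * (norm1 beta / K) by field; lra.
have n1K_gt0 : 0 < norm1 beta / K by rewrite divr_gt0 //; lra.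
have := norm1_le_invmx A_unit Ab_small.
rewrite {1}n1E; nra.
Qed.

Lemma card_large_rows_ge (beta : 'cV[R]_p) : (p <= m)%N -> 0 < norm1 beta ->
  (m - p + 1 <= #|[set i | (norm1 beta / K <= `|(Z *m beta) i 0|)%R]|)%N.
Proof.
move=> le_pm n1_gt0; have := card_small_rows_lt n1_gt0.
set S := [set i | _].
have -> : [set i | (norm1 beta / K <= `|(Z *m beta) i 0|)%R] = ~: S.
  by apply/setP => i; rewrite !inE leNgt.
by have := cardsC S; rewrite card_ord; lia.
Qed.

Lemma residual_lower_bound (w : 'cV[R]_m) (beta : 'cV[R]_p) (i : 'I_m) :
  2 * (K * norm1 w) <= eucl_norm beta ->
  norm1 beta / K <= `|(Z *m beta) i 0| ->
  (2 * K)^-1 * eucl_norm beta <= `|w i 0 - (Z *m beta) i 0|.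
Proof.
set N := eucl_norm beta => w_small row_large.
have K_gt0 : 0 < K by have := gp_constant_ge1; rewrite -/K; lra.
have wi_le : `|w i 0| <= norm1 w.
  by rewrite /norm1; apply: ler_sumr_term => j.
have halfE : (2 * K)^-1 * N = N / K / 2 by field; lra.
have w_le : norm1 w <= N / K / 2 by rewrite !ler_pdivlMr //; lra.
have NK_le : N / K <= norm1 beta / K.
  by rewrite ler_pM2r ?invr_gt0 // eucl_norm_le_norm1.
have := lerB_dist ((Z *m beta) i 0) (w i 0); rewrite distrC.
lra.
Qed.

End GeneralPosition.

Theorem lemmaS4 (R : realType) (m p : nat) (hmp : (p <= m)%N)
  (w : 'cV[R]_m) (Z : 'M[R]_(m, p)) (hZ : rows_in_general_position Z) :
  exists Rr : R, 0 < Rr /\ exists delta : R, 0 < delta /\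
    forall beta : 'cV[R]_p, Rr <= eucl_norm beta ->
      \prod_(i < m) (1 + `|w i 0 - (Z *m beta) i 0|)^-1
        <= ((1 + delta * eucl_norm beta) ^+ (m - p + 1))^-1.
Proof.
pose K := gp_constant Z; have K1 : 1 <= K := gp_constant_ge1 Z.
have Kw_ge0 : 0 <= K * norm1 w by rewrite mulr_ge0 ?sumr_ge0 //; lra.
exists (2 * (K * norm1 w) + 1); split; first lra.
exists (2 * K)^-1; split; first by rewrite invr_gt0; lra.
move=> beta beta_large; have N_gt0 : 0 < eucl_norm beta by lra.
have n1_gt0 := lt_le_trans N_gt0 (eucl_norm_le_norm1 beta).
apply: (prod_inv1D_le _ _ (card_large_rows_ge hZ hmp n1_gt0)) => [||i].
- by rewrite mulr_ge0 ?invr_ge0 //; lra.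
- by move=> i; apply: normr_ge0.
- by rewrite inE; apply: residual_lower_bound; rewrite -/K; lra.
Qed.
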